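(* Let $k \geq 2$ and $n \geq 1$ be integers and $\Sigma_k = \{0,\ldots,k-1\}$. Suppose $w$ is a word over $\Sigma_k$ that contains every square in $\Sigma_k^{2n}$ as a factor. Then $|w| \geq k^n + n\,C(n,k) \geq 2k^n$.
   Context: A word is a square if it equals $xx$ for some word $x$; the squares in $\Sigma_k^{2n}$ are exactly the words $xx$ with $x \in \Sigma_k^n$. Two words $u,v \in \Sigma_k^n$ are conjugate if $u = ab$ and $v = ba$ for some words $a,b$. $C(n,k)$ denotes the number of conjugacy classes in $\Sigma_k^n$, i.e. $C(n,k) = \sum_{d \mid n} \frac{\phi(d)}{n} k^{n/d}$ with $\phi$ Euler's totient function. A factor of a word is a contiguous block of consecutive symbols. *)

From mathcomp Require Import all_boot.
Set Implicit Arguments. Unset Strict Implicit. Unset Printing Implicit Defensive.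

Definition is_factor (T : eqType) (u w : seq T) : bool := infix u w.

(* C(n,k) = sum_{d | n} phi(d)/n * k^(n/d), the number of conjugacy classes
   of words of length n over a k-letter alphabet (the sum is an integer;
   we compute (sum_{d|n} phi(d) k^(n/d)) / n, which is exact). *)
Definition C (n k : nat) : nat :=
  (\sum_(d <- divisors n) totient d * k ^ (n %/ d)) %/ n.

From mathcomp Require Import all_boot all_fingroup zify zmodp.
Set Implicit Arguments. Unset Strict Implicit. Unset Printing Implicit Defensive.

(* By Burnside's lemma, C(n,k) is the number of orbits ("necklaces") of the
   rotation action of Z/n on words of length n.  Let pos x be the first
   occurrence of the square xx in w.  If pos x < pos y <= pos x + n, then y is
   a rotation of x.  Hence if R collects, in each necklace, the word whose
   square occurs first, then the n positions just before pos y, y in R, hit no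
   occurrence position and belong to no other such block.  Counting the k^n
   occurrence positions, shifted by n, together with these n |R| positions
   inside [0, |w| - n] gives |w| >= k^n + n C(n,k) + n - 1.  Finally
   n C(n,k) >= k^n is the d = 1 term of the sum defining C(n,k). *)

Lemma nth_rot (T : Type) (x0 : T) (s : seq T) j i :
  j <= size s -> i < size s -> nth x0 (rot j s) i = nth x0 s ((i + j) %% size s).
Proof.
move=> le_js lt_is; rewrite /rot nth_cat size_drop.
case: ltnP => [lt_i_sj | le_sj_i].
  by rewrite nth_drop modn_small 1?addnC //; lia.
rewrite nth_take; last by lia.
have -> : i + j = (i - (size s - j)) + size s by lia.
by rewrite modnDr modn_small //; lia.
Qed.

Lemma take_drop_cat_rot (T : Type) (x s : seq T) d : d <= size x ->
  take (size x) (drop d (x ++ x ++ s)) = rot d x.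
Proof.
rewrite leq_eqVlt => /orP[/eqP-> | ltdx].
  by rewrite drop_size_cat // take_size_cat // rot_size.
rewrite drop_cat ltdx take_cat size_drop ltnNge leq_subr /=.
by rewrite subKn 1?ltnW // takel_cat 1?ltnW.
Qed.

Lemma periodic_modn_gcd (T : Type) (f : nat -> T) n j : 0 < n ->
  (forall i, i < n -> f ((i + j) %% n) = f i) ->
  forall i, i < n -> f i = f (i %% gcdn j n).
Proof.
move=> n_gt0 f_per.
have f_perM a i : i < n -> f ((i + a * j) %% n) = f i.
  elim: a i => [|a IHa] i lt_in; first by rewrite mul0n addn0 modn_small.
  have -> : (i + a.+1 * j) %% n = ((i + a * j) %% n + j) %% n.
    by rewrite modnDml mulSn; congr (_ %% _); lia.
  by rewrite f_per ?ltn_pmod // IHa.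
have [a _ Bezout_a] := Bezoutl j n_gt0.
set g := gcdn j n.
have g_gt0 : 0 < g by rewrite gcdn_gt0 n_gt0 orbT.
(* a * j = g modulo n, so shifting by a * j steps back by g *)
have f_back i : g <= i -> i < n -> f i = f (i - g).
  move=> le_gi lt_in; rewrite -(f_perM a i lt_in).
  have -> : i + a * j = (i - g) + (gcdn n j + a * j) by rewrite gcdnC /g; lia.
  by rewrite -modnDmr (eqP Bezout_a) addn0 modn_small //; lia.
elim/ltn_ind=> i IHi lt_in.
have [lt_ig | le_gi] := ltnP i g; first by rewrite modn_small.
rewrite f_back // IHi; [|lia|lia].
by rewrite -{2}(subnK le_gi) modnDr.
Qed.

Lemma card_gcdn_eq_div n d : 0 < n -> d %| n ->
  #|[set j : 'I_n | gcdn j n == n %/ d]| = totient d.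
Proof.
move=> n_gt0 dvd_dn.
set e := n %/ d.
have n_de : n = d * e by rewrite /e mulnC divnK.
have e_gt0 : 0 < e by move: n_gt0; rewrite n_de muln_gt0 => /andP[].
have lt_ie_n (i : 'I_d) : i * e < n by rewrite n_de ltn_pmul2r.
pose h (i : 'I_d) : 'I_n := Ordinal (lt_ie_n i).
have -> : [set j : 'I_n | gcdn j n == e] = h @: [set i : 'I_d | coprime d i].
  apply/setP => j; rewrite !inE; apply/idP/imsetP.
  - move=> /eqP gcd_jn.
    have dvd_ej : e %| j by rewrite -gcd_jn dvdn_gcdl.
    have lt_jd : j %/ e < d by rewrite ltn_divLR // -n_de.
    exists (Ordinal lt_jd); last by apply: val_inj; rewrite /= divnK.
    rewrite inE /= /coprime.
    have : gcdn (j %/ e * e) (d * e) = e by rewrite divnK // -n_de.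
    rewrite -muln_gcdl gcdnC.
    by rewrite -[X in _ = X -> _]mul1n => /eqP; rewrite eqn_pmul2r.
  - case=> i; rewrite inE => /eqP coprime_di ->.
    by rewrite /= n_de -muln_gcdl gcdnC coprime_di mul1n.
rewrite card_in_imset; last first.
  by move=> a b _ _ /(congr1 val) /= /eqP; rewrite eqn_pmul2r // => /eqP /val_inj.
rewrite -sum1dep_card totient_count_coprime big_mkord big_mkcond /=.
by apply: eq_bigr => i _; case: coprime.
Qed.

Lemma sum_gcdn_divisors n (f : nat -> nat) : 0 < n ->
  \sum_(j < n) f (gcdn j n) = \sum_(d <- divisors n) totient d * f (n %/ d).
Proof.
move=> n_gt0.
have f_gcd (j : 'I_n) : f (gcdn j n) =
    \sum_(d <- divisors n) (if gcdn j n == n %/ d then f (n %/ d) else 0).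
  set dj := n %/ gcdn j n.
  have n_dj : n = dj * gcdn j n by rewrite divnK ?dvdn_gcdr.
  have dj_div : dj \in divisors n by rewrite -dvdn_divisors // n_dj dvdn_mulr.
  have dj_gt0 : 0 < dj by rewrite n_dj muln_gt0 in n_gt0; case/andP: n_gt0.
  have dj_gcd : n %/ dj = gcdn j n by rewrite {1}n_dj mulKn.
  rewrite (bigD1_seq dj) ?divisors_uniq //= dj_gcd eqxx.
  rewrite big1_seq ?addn0 // => d /andP[ne_d_dj]; rewrite -dvdn_divisors //.
  case/dvdnP=> q n_qd; case: eqP => // gcd_q.
  suff : d == dj by rewrite (negPf ne_d_dj).
  have /andP[q_gt0 d_gt0] : (0 < q) && (0 < d) by rewrite -muln_gt0 -n_qd.
  by rewrite /dj gcd_q n_qd mulnK // mulKn.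
rewrite (eq_bigr _ (fun j _ => f_gcd j)) exchange_big /=.
apply: eq_big_seq => d; rewrite -dvdn_divisors // => dvd_dn.
by rewrite -big_mkcond /= sum_nat_cond_const card_gcdn_eq_div.
Qed.

Section RotationAction.

Variables (k n' : nat).
Local Notation n := n'.+1.
Local Notation word := (n.-tuple 'I_k).

Definition rot_tuple (t : word) (j : 'I_n) : word := [tuple of rot j t].

Lemma rot_tuple1 : rot_tuple^~ 1%g =1 id.
Proof. by move=> t; apply: val_inj; rewrite /= rot0. Qed.

Lemma rot_tupleM t : act_morph rot_tuple t.
Proof.
move=> a b; apply: val_inj => /=.
rewrite rot_add_mod ?size_tuple; [|exact: ltnW|exact: ltnW].
have [le_ba_n | lt_n_ba] := leqP.
  have [lt_ba_n | le_n_ba] := ltnP (b + a) n; first by rewrite modn_small // addnC.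
  have -> : a + b = n by lia.
  by rewrite modnn rot0 rot_oversize // size_tuple.
have -> : a + b = (b + a - n) + n by lia.
by rewrite modnDr modn_small //; move: (ltn_ord a) (ltn_ord b); lia.
Qed.

Definition rot_action := TotalAction rot_tuple1 rot_tupleM.

Definition necklaces := [set orbit rot_action [set: 'I_n] x | x in [set: word]].

Lemma rot_mem_orbit (x : word) d : d <= n ->
  [tuple of rot d x] \in orbit rot_action [set: 'I_n] x.
Proof.
move=> le_dn; suff -> : [tuple of rot d x] = rot_action x (inZp d).
  by apply: mem_orbit; rewrite inE.
apply: val_inj; have [lt_dn | le_nd] := ltnP d n; first by rewrite /= modn_small.
have -> : d = n by lia.
by rewrite /= modnn rot0 rot_oversize ?size_tuple.
Qed.

Lemma card_rot_fix (j : 'I_n) :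
  #|('Fix_([set: word] | rot_action)[j])%g| = k ^ gcdn j n.
Proof.
set g := gcdn j n.
have g_gt0 : 0 < g by rewrite gcdn_gt0 orbT.
have le_gn : g <= n by apply/dvdn_leq/dvdn_gcdr.
pose periodic (u : g.-tuple 'I_k) : word :=
  [tuple tnth u (Ordinal (ltn_pmod i g_gt0)) | i < n].
have nth_periodic x0 u i (lt_in : i < n) :
    nth x0 (periodic u) i = tnth u (Ordinal (ltn_pmod i g_gt0)).
  by rewrite -(tnth_nth x0 (periodic u) (Ordinal lt_in)) tnth_mktuple.
have -> : ('Fix_([set: word] | rot_action)[j])%g = periodic @: setT.
  apply/setP => t; rewrite !inE /= sub1set inE; apply/idP/imsetP.
  - move=> /eqP /(congr1 val) /= fix_t; pose x0 := thead t.
    have t_per i : i < n -> nth x0 t i = nth x0 t (i %% g).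
      apply: (@periodic_modn_gcd _ (nth x0 t) n j) => // m lt_mn.
      by rewrite -{2}fix_t nth_rot ?size_tuple // ltnW.
    exists [tuple tnth t (widen_ord le_gn i) | i < g] => //.
    apply: eq_from_tnth => i; rewrite !tnth_mktuple !(tnth_nth x0) /=.
    exact: t_per.
  - case=> u _ ->; apply/eqP/val_inj => /=.
    apply: (@eq_from_nth _ (thead (periodic u))); first by rewrite size_rot.
    move=> i; rewrite size_rot size_tuple card_ord => lt_in.
    rewrite nth_rot ?size_tuple ?card_ord ?(ltnW (ltn_ord j)) //.
    rewrite !nth_periodic ?ltn_pmod //.
    congr tnth; apply: val_inj => /=.
    by rewrite modn_dvdm ?dvdn_gcdr // -modnDmr (eqP (dvdn_gcdl j n)) addn0.
rewrite card_imset ?cardsT ?card_tuple ?card_ord // => u v eq_uv.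
apply: eq_from_tnth => i; have lt_in := leq_trans (ltn_ord i) le_gn.
have := congr1 (fun t : word => tnth t (Ordinal lt_in)) eq_uv.
rewrite /= !tnth_mktuple.
by have -> : Ordinal (ltn_pmod i g_gt0) = i by apply: val_inj; rewrite /= modn_small.
Qed.

Lemma card_necklaces :
  #|necklaces| * n = \sum_(d <- divisors n) totient d * k ^ (n %/ d).
Proof.
have acts_rot : [acts [set: 'I_n]%G, on [set: word] | rot_action].
  by apply/actsP => a _ x; rewrite !inE.
have := Frobenius_Cauchy acts_rot; rewrite cardsT card_ord => <-.
rewrite -sum_gcdn_divisors // big_mkcond /=.
by apply: eq_bigr => j _; rewrite inE card_rot_fix.
Qed.

Lemma C_card_necklaces : C n k = #|necklaces|.
Proof. by rewrite /C -card_necklaces mulnK. Qed.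

Lemma expn_le_card_necklaces : k ^ n <= #|necklaces| * n.
Proof.
rewrite card_necklaces (bigD1_seq 1) ?divisor1 ?divisors_uniq //=.
by rewrite divn1 mul1n leq_addr.
Qed.

End RotationAction.

Lemma sparse_positions_count (T : finType) (pos : T -> nat) (R : {set T}) N n :
  injective pos -> (forall x, pos x < N) ->
  (forall x y, y \in R -> ~~ (pos x < pos y <= pos x + n)) ->
  #|T| + #|R| * n <= N + n.
Proof.
move=> pos_inj pos_lt sparse.
(* the positions pos x + n, and the blocks pos y + i (y in R, i < n), which
   stand for the n positions just before pos y *)
pose marks := [seq pos x + n | x <- enum T] ++
              [seq pos y + i | y <- enum R, i <- iota 0 n].
have <- : size marks = #|T| + #|R| * n.
  by rewrite size_cat size_map size_allpairs size_iota -!cardE.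
rewrite -(size_iota 0 (N + n)); apply: uniq_leq_size => [|m].
  rewrite cat_uniq map_inj_uniq ?enum_uniq /=; last by move=> x y /addIn/pos_inj.
  apply/andP; split.
    apply/hasPn => m /allpairsP[[y i] [/=]].
    rewrite mem_enum mem_iota => yR lt_in ->.
    apply/mapP=> -[x _ eq_xy]; move: (sparse x y yR); lia.
  apply: allpairs_uniq; rewrite ?enum_uniq ?iota_uniq // => -[z l] [z' l'].
  move=> /allpairsP[[y i] [/= + + [-> ->]]] /allpairsP[[y' i'] [/= + + [-> ->]]] /=.
  rewrite !mem_enum !mem_iota => yR lt_in y'R lt_i'n eq_pos.
  have [lt_yy' | lt_y'y | eq_yy'] := ltngtP (pos y) (pos y').
  - by move: (sparse y y' y'R); lia.
  - by move: (sparse y' y yR); lia.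
  - by rewrite (pos_inj _ _ eq_yy'); congr pair; lia.
rewrite mem_cat mem_iota /= => /orP[/mapP[x _ ->] | /allpairsP[[y i] [/=]]].
  by rewrite ltn_add2r.
by rewrite mem_iota => _ lt_in ->; have := pos_lt y; lia.
Qed.

Section SquareCover.

Variables (k n' : nat) (w : seq 'I_k).
Local Notation n := n'.+1.
Local Notation word := (n.-tuple 'I_k).
Hypothesis w_squares : forall x : word, infix (x ++ x) w.

Definition square_pos (x : word) := infix_index (x ++ x) w.

Lemma drop_square_pos x : exists s, drop (square_pos x) w = x ++ x ++ s.
Proof.
exists (drop (n + n) (drop (square_pos x) w)).
have := w_squares x; rewrite infixE size_cat size_tuple catA => /eqP <-.
by rewrite cat_take_drop.
Qed.

Lemma square_pos_bound x : square_pos x + (n + n) <= size w.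
Proof.
have [s /(congr1 size)] := drop_square_pos x.
by rewrite size_drop !size_cat size_tuple; lia.
Qed.

Lemma take_drop_square_pos x : take n (drop (square_pos x) w) = x.
Proof. by have [s ->] := drop_square_pos x; rewrite take_size_cat ?size_tuple. Qed.

Lemma square_pos_inj : injective square_pos.
Proof.
move=> x y eq_xy; apply: val_inj.
by rewrite /= -(take_drop_square_pos x) -(take_drop_square_pos y) eq_xy.
Qed.

Lemma square_pos_close_orbit x y :
  square_pos x <= square_pos y <= square_pos x + n ->
  y \in orbit (rot_action k n') [set: 'I_n] x.
Proof.
case/andP=> le_xy le_yx; set d := square_pos y - square_pos x.
have le_dn : d <= n by rewrite leq_subLR.
suff -> : y = [tuple of rot d x] by apply: rot_mem_orbit.
apply: val_inj; rewrite /= -(take_drop_square_pos y) -(subnK le_xy) -/d.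
rewrite -drop_drop; have [s ->] := drop_square_pos x.
by rewrite -{1}(size_tuple x) take_drop_cat_rot ?size_tuple.
Qed.

Definition first_in_orbit := [set x : word |
  [forall y in orbit (rot_action k n') [set: 'I_n] x, square_pos x <= square_pos y]].

Lemma card_necklaces_le_first_in_orbit : #|necklaces k n'| <= #|first_in_orbit|.
Proof.
apply: leq_trans (leq_imset_card (orbit (rot_action k n') [set: 'I_n]) _).
apply/subset_leq_card/subsetP => _ /imsetP[x _ ->].
have x_orb := orbit_refl (rot_action k n') setT x.
have [y y_orb y_first] := arg_minnP square_pos x_orb.
apply/imsetP; exists y; last exact/esym/orbit_eqP.
rewrite inE; apply/forall_inP => z z_orb; apply: y_first.
exact: orbit_trans z_orb y_orb.
Qed.

Lemma first_in_orbit_sparse x y : y \in first_in_orbit ->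
  ~~ (square_pos x < square_pos y <= square_pos x + n).
Proof.
rewrite inE => /forall_inP y_first; apply/andP=> -[lt_xy le_yx].
have /y_first : x \in orbit (rot_action k n') [set: 'I_n] y.
  by rewrite orbit_sym square_pos_close_orbit // ltnW.
by rewrite leqNgt lt_xy.
Qed.

Lemma size_square_cover : 0 < k -> k ^ n + #|necklaces k n'| * n + n' <= size w.
Proof.
move=> k_gt0.
have pos_lt x : square_pos x < (size w - (n + n)).+1.
  by have := square_pos_bound x; lia.
have := sparse_positions_count square_pos_inj pos_lt first_in_orbit_sparse.
rewrite card_tuple card_ord => bound.
have := leq_mul2r n #|necklaces k n'| #|first_in_orbit|.
rewrite card_necklaces_le_first_in_orbit orbT => le_cards.
by have := square_pos_bound [tuple of nseq n (Ordinal k_gt0)]; lia.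
Qed.

End SquareCover.

Theorem proposition5 (k n : nat) (w : seq 'I_k) :
  2 <= k -> 1 <= n ->
  (forall x : seq 'I_k, size x = n -> is_factor (x ++ x) w) ->
  k ^ n + n * C n k <= size w /\ 2 * k ^ n <= k ^ n + n * C n k.
Proof.
case: n => [|n'] // le2k _ w_squares.
have w_tuple_squares (x : n'.+1.-tuple 'I_k) : infix (x ++ x) w.
  exact/w_squares/size_tuple.
have := size_square_cover w_tuple_squares (ltnW le2k).
have := expn_le_card_necklaces k n'.
rewrite C_card_necklaces mulnC; lia.
Qed.
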